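(* Every regular normal extremal that is time-optimal for the problem below begins with an $X$-arc; that is, the control $A$ equals $X$ on some interval $[0,\delta)$, $\delta>0$.
   Context: Fix $\gamma\in(0,\pi/2)$, $s=\sin\gamma$, $c=\cos\gamma$, and $X=\begin{pmatrix}0&s^2&sc\\-s^2&0&0\\-sc&0&0\end{pmatrix}$, $Y=\begin{pmatrix}0&1&0\\-1&0&0\\0&0&0\end{pmatrix}$ on $\mathbb R^3$ with standard basis $e_1,e_2,e_3$ and standard inner product. Let $\Sigma=\{\psi:\langle e_3,\psi\rangle=0\}$, $\psi_0=(0,s,c)^\top$ (the large-block limit of the uniform superposition). Time-optimal problem: over piecewise constant controls $A:[0,T]\to\{X,Y\}$ with finitely many discontinuities (switching times) and trajectories $\dot\psi=A(t)\psi$, $\psi(0)=\psi_0$, minimize $T$ subject to $\psi(T)\in\Sigma$. Maximal intervals on which $A\equiv X$ are $X$-arcs. A normal extremal is such a trajectory with a nonzero absolutely continuous costate $p$ satisfying $\dot p=-A(t)^\top p$ and, for a.e. $t$, $\langle p,A(t)\psi\rangle-1=\max_{B\in\{X,Y\}}(\langle p,B\psi\rangle-1)$. With $\phi_1=\langle p,(X-Y)\psi\rangle$ and $\phi_2=\langle p,[X,Y]\psi\rangle$, a normal extremal is regular (bang–bang) if $\phi_1$ vanishes only at isolated times and at every switching time $\phi_1=0$ and $\phi_2\neq0$. *)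

From Stdlib Require Import Reals Lra List.
Open Scope R_scope.

(* Vectors of R^3 and 3x3 matrices, indices 0,1,2 (standard basis e1,e2,e3). *)
Definition vec := nat -> R.
Definition mat := nat -> nat -> R.

Definition ip (u v : vec) : R := u 0%nat * v 0%nat + u 1%nat * v 1%nat + u 2%nat * v 2%nat.
Definition mv (M : mat) (v : vec) : vec :=
  fun i => M i 0%nat * v 0%nat + M i 1%nat * v 1%nat + M i 2%nat * v 2%nat.
Definition mmul (M N : mat) : mat :=
  fun i j => M i 0%nat * N 0%nat j + M i 1%nat * N 1%nat j + M i 2%nat * N 2%nat j.
Definition msub (M N : mat) : mat := fun i j => M i j - N i j.
Definition mopp (M : mat) : mat := fun i j => - M i j.
Definition mtr (M : mat) : mat := fun i j => M j i.
Definition comm (M N : mat) : mat := msub (mmul M N) (mmul N M).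
Definition vzero (v : vec) : Prop := v 0%nat = 0 /\ v 1%nat = 0 /\ v 2%nat = 0.

Definition matX (g : R) : mat := fun i j =>
  match i, j with
  | 0%nat, 1%nat => sin g ^ 2
  | 0%nat, 2%nat => sin g * cos g
  | 1%nat, 0%nat => - sin g ^ 2
  | 2%nat, 0%nat => - (sin g * cos g)
  | _, _ => 0
  end.
Definition matY : mat := fun i j =>
  match i, j with
  | 0%nat, 1%nat => 1
  | 1%nat, 0%nat => -1
  | _, _ => 0
  end.

Definition matA (g : R) (b : bool) : mat := if b then matX g else matY.

Definition e3 : vec := fun i => if Nat.eqb i 2 then 1 else 0.
Definition psi0 (g : R) : vec := fun i =>
  match i with 1%nat => sin g | 2%nat => cos g | _ => 0 end.
Definition inSigma (v : vec) : Prop := ip e3 v = 0.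

Definition loc_const (A : R -> bool) (T t : R) : Prop :=
  exists d, 0 < d /\ forall s, 0 <= s <= T -> Rabs (s - t) < d -> A s = A t.
Definition switching_time (A : R -> bool) (T t : R) : Prop :=
  0 <= t <= T /\ ~ loc_const A T t.
Definition admissible_control (A : R -> bool) (T : R) : Prop :=
  exists l : list R, forall t, switching_time A T t -> In t l.

Definition vcont_on (f : R -> vec) (T : R) : Prop :=
  forall (i : nat) t eps, (i < 3)%nat -> 0 <= t <= T -> 0 < eps ->
    exists d, 0 < d /\ forall s, 0 <= s <= T -> Rabs (s - t) < d ->
      Rabs (f s i - f t i) < eps.

(* For piecewise constant controls this is the
   same as an absolutely continuous (Caratheodory) solution. *)
Definition solves (A : R -> bool) (T : R) (M : bool -> mat) (f : R -> vec) : Prop :=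
  vcont_on f T /\
  forall t, 0 < t < T -> ~ switching_time A T t ->
    forall i, (i < 3)%nat -> derivable_pt_lim (fun s => f s i) t (mv (M (A t)) (f t) i).

Definition admissible (g : R) (T : R) (A : R -> bool) (psi : R -> vec) : Prop :=
  0 <= T /\ admissible_control A T /\ solves A T (matA g) psi /\
  (forall i, psi 0 i = psi0 g i) /\ inSigma (psi T).

Definition time_optimal (g : R) (T : R) (A : R -> bool) (psi : R -> vec) : Prop :=
  admissible g T A psi /\
  forall T' A' psi', admissible g T' A' psi' -> T <= T'.

Definition negligible (S : R -> Prop) : Prop :=
  forall eps, 0 < eps -> exists a b : nat -> R,
    (forall n, a n <= b n) /\
    (forall x, S x -> exists n, a n < x < b n) /\
    (forall N, sum_f_R0 (fun n => b n - a n) N < eps).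

Definition normal_extremal (g T : R) (A : R -> bool) (psi p : R -> vec) : Prop :=
  admissible g T A psi /\
  ~ (forall t, 0 <= t <= T -> vzero (p t)) /\
  solves A T (fun b => mopp (mtr (matA g b))) p /\
  negligible (fun t => 0 <= t <= T /\
    ~ (ip (p t) (mv (matA g (A t)) (psi t)) - 1 =
       Rmax (ip (p t) (mv (matX g) (psi t)) - 1) (ip (p t) (mv matY (psi t)) - 1))).

Definition phi1 (g : R) (psi p : R -> vec) (t : R) : R :=
  ip (p t) (mv (msub (matX g) matY) (psi t)).
Definition phi2 (g : R) (psi p : R -> vec) (t : R) : R :=
  ip (p t) (mv (comm (matX g) matY) (psi t)).

Definition regular (g T : R) (A : R -> bool) (psi p : R -> vec) : Prop :=
  normal_extremal g T A psi p /\
  (forall t, 0 <= t <= T -> phi1 g psi p t = 0 ->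
     exists e, 0 < e /\ forall s, 0 <= s <= T -> 0 < Rabs (s - t) < e ->
       phi1 g psi p s <> 0) /\
  (forall t, switching_time A T t -> phi1 g psi p t = 0 /\ phi2 g psi p t <> 0).

(* Time optimality alone forces the initial X-arc.
   In the orthonormal frame e1, psi0, (0, cos g, - sin g) the constant control X rotates psi0
   towards e1 at angular speed sin g, reaching Sigma at time PI / (2 sin g).  For any admissible
   trajectory let T1 be its first time on Sigma and t0 the last time before T1 at which psi = psi0.
   The angle between psi and psi0 grows at speed at most sin g.  If psi_along becomes <= 0 before
   T1, this angle reaches PI / 2, so T1 >= PI / (2 sin g), strictly if the control starts with Y,
   because on a Y-arc leaving psi0 the angle grows strictly slower.  Otherwise a Lyapunov function
   with rate <= 1 gives T1 - t0 >= (PI / 2 - g) / sin g + 1 / cos g > PI / (2 sin g), using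
   g < tan g.  So a control starting with Y is slower than the pure X-arc. *)

From Stdlib Require Import Reals Lra Lia List Classical.
Open Scope R_scope.

(** * Real-variable lemmas *)

(* The Stdlib rules, restated on lambda terms so that [apply] matches them directly. *)
Lemma dlim_plus (f h : R -> R) x l1 l2 : derivable_pt_lim f x l1 -> derivable_pt_lim h x l2 ->
  derivable_pt_lim (fun y => f y + h y) x (l1 + l2).
Proof. intros; apply (derivable_pt_lim_plus f h); auto. Qed.

Lemma dlim_minus (f h : R -> R) x l1 l2 : derivable_pt_lim f x l1 -> derivable_pt_lim h x l2 ->
  derivable_pt_lim (fun y => f y - h y) x (l1 - l2).
Proof. intros; apply (derivable_pt_lim_minus f h); auto. Qed.

Lemma dlim_mult (f h : R -> R) x l1 l2 : derivable_pt_lim f x l1 -> derivable_pt_lim h x l2 ->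
  derivable_pt_lim (fun y => f y * h y) x (l1 * h x + f x * l2).
Proof. intros; apply (derivable_pt_lim_mult f h); auto. Qed.

Lemma dlim_scal a (f : R -> R) x l : derivable_pt_lim f x l ->
  derivable_pt_lim (fun y => a * f y) x (a * l).
Proof. intros; apply (derivable_pt_lim_scal f); auto. Qed.

Lemma dlim_opp (f : R -> R) x l : derivable_pt_lim f x l -> derivable_pt_lim (fun y => - f y) x (- l).
Proof. intros; apply (derivable_pt_lim_opp f); auto. Qed.

Lemma dlim_div (f h : R -> R) x l1 l2 : derivable_pt_lim f x l1 -> derivable_pt_lim h x l2 ->
  h x <> 0 -> derivable_pt_lim (fun y => f y / h y) x ((l1 * h x - l2 * f x) / (h x)²).
Proof. intros; apply (derivable_pt_lim_div f h); auto. Qed.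

Lemma dlim_comp (f h : R -> R) x l1 l2 : derivable_pt_lim f x l1 -> derivable_pt_lim h (f x) l2 ->
  derivable_pt_lim (fun y => h (f y)) x (l2 * l1).
Proof. intros; apply (derivable_pt_lim_comp f h); auto. Qed.

Lemma dlim_sqr (f : R -> R) x l : derivable_pt_lim f x l ->
  derivable_pt_lim (fun y => f y ^ 2) x (2 * f x * l).
Proof.
  intros H. apply (derivable_pt_lim_ext (fun y => f y * f y)); [intros; ring|].
  replace (2 * f x * l) with (l * f x + f x * l) by ring. apply dlim_mult; auto.
Qed.

Lemma dlim_scaled_sqr k a t : derivable_pt_lim (fun y => k * (y - a) ^ 2) t (2 * k * (t - a)).
Proof.
  replace (2 * k * (t - a)) with (k * (2 * (t - a) * (1 - 0))) by ring.
  apply dlim_scal, (dlim_sqr (fun y => y - a)), dlim_minus;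
    [apply derivable_pt_lim_id|apply derivable_pt_lim_const].
Qed.

Lemma cont_plus (f h : R -> R) x : continuity_pt f x -> continuity_pt h x ->
  continuity_pt (fun y => f y + h y) x.
Proof. intros; apply (continuity_pt_plus f h); auto. Qed.

Lemma cont_minus (f h : R -> R) x : continuity_pt f x -> continuity_pt h x ->
  continuity_pt (fun y => f y - h y) x.
Proof. intros; apply (continuity_pt_minus f h); auto. Qed.

Lemma cont_mult (f h : R -> R) x : continuity_pt f x -> continuity_pt h x ->
  continuity_pt (fun y => f y * h y) x.
Proof. intros; apply (continuity_pt_mult f h); auto. Qed.

Lemma cont_scal a (f : R -> R) x : continuity_pt f x -> continuity_pt (fun y => a * f y) x.
Proof. intros; apply (continuity_pt_scal f); auto. Qed.

Lemma cont_opp (f : R -> R) x : continuity_pt f x -> continuity_pt (fun y => - f y) x.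
Proof. intros; apply (continuity_pt_opp f); auto. Qed.

Lemma cont_div (f h : R -> R) x : continuity_pt f x -> continuity_pt h x -> h x <> 0 ->
  continuity_pt (fun y => f y / h y) x.
Proof. intros; apply (continuity_pt_div f h); auto. Qed.

Lemma cont_comp (f h : R -> R) x : continuity_pt f x -> continuity_pt h (f x) ->
  continuity_pt (fun y => h (f y)) x.
Proof. intros; apply (continuity_pt_comp f h); auto. Qed.

Lemma cont_id x : continuity_pt (fun y => y) x.
Proof. apply derivable_continuous_pt, derivable_pt_id. Qed.

Lemma cont_const a x : continuity_pt (fun _ => a) x.
Proof. apply continuity_pt_const; intros ? ?; reflexivity. Qed.

Lemma cont_sqr (f : R -> R) x : continuity_pt f x -> continuity_pt (fun y => f y ^ 2) x.
Proof.
  intros H. apply (continuity_pt_locally_ext (fun y => f y * f y) _ 1); [lra|intros; ring|].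
  apply cont_mult; auto.
Qed.

Lemma cont_scaled_sqr k a t : continuity_pt (fun y => k * (y - a) ^ 2) t.
Proof. apply cont_scal, cont_sqr, cont_minus; [apply cont_id|apply cont_const]. Qed.

Lemma continuity_pt_eps (f : R -> R) x : continuity_pt f x <->
  forall e, 0 < e -> exists d, 0 < d /\ forall y, Rabs (y - x) < d -> Rabs (f y - f x) < e.
Proof.
  unfold continuity_pt, continue_in, limit1_in, limit_in; simpl; unfold R_dist.
  split; intros H e He; destruct (H e He) as [d [Hd H']]; exists d; split; auto.
  - intros y Hy. destruct (Req_dec y x) as [->|Hne].
    + rewrite Rminus_diag, Rabs_R0; auto.
    + apply H'. repeat split; auto.
  - intros y [_ Hy]. auto.
Qed.

Lemma continuity_pt_pos_nbhd (f : R -> R) x : continuity_pt f x -> 0 < f x ->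
  exists d, 0 < d /\ forall y, Rabs (y - x) < d -> 0 < f y.
Proof.
  intros Hc Hx. destruct (proj1 (continuity_pt_eps f x) Hc (f x) Hx) as [d [Hd H]].
  exists d. split; auto. intros y Hy. pose proof (H y Hy) as Hy'.
  apply Rabs_def2 in Hy'. lra.
Qed.

Lemma nonpos_of_left_run (f : R -> R) a m : a < m -> continuity_pt f m ->
  (forall t, a <= t < m -> f t <= 0) -> f m <= 0.
Proof.
  intros Ham Hc Hrun. destruct (Rle_dec (f m) 0) as [|Hpos]; auto.
  destruct (continuity_pt_pos_nbhd f m Hc ltac:(lra)) as [d [Hd H]].
  set (t := Rmax a (m - d / 2)).
  assert (a <= t) by apply Rmax_l. assert (m - d / 2 <= t) by apply Rmax_r.
  assert (t < m) by (apply Rmax_lub_lt; lra).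
  assert (0 < f t) by (apply H; rewrite Rabs_left; lra).
  pose proof (Hrun t ltac:(lra)). lra.
Qed.

Lemma nonpos_of_right_points (f : R -> R) m : continuity_pt f m ->
  (forall eta, 0 < eta -> exists t, m <= t < m + eta /\ f t <= 0) -> f m <= 0.
Proof.
  intros Hc Hpts. destruct (Rle_dec (f m) 0) as [|Hpos]; auto.
  destruct (continuity_pt_pos_nbhd f m Hc ltac:(lra)) as [d [Hd H]].
  destruct (Hpts d Hd) as [t [Ht Hft]].
  assert (0 < f t) by (apply H; rewrite Rabs_right; lra). lra.
Qed.

Lemma sup_initial_run (P : R -> Prop) a b : a <= b ->
  exists m, a <= m <= b /\ (forall t, a <= t < m -> P t) /\
    (m < b -> forall eta, 0 < eta -> exists t, m <= t < m + eta /\ t <= b /\ ~ P t).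
Proof.
  intros Hab.
  set (E := fun x => a <= x <= b /\ forall t, a <= t < x -> P t).
  assert (Ea : E a) by (split; [lra|intros; lra]).
  destruct (completeness E) as [m [Hub Hleast]].
  { exists b. intros x [Hx _]. lra. }
  { exists a. exact Ea. }
  assert (Ham : a <= m) by (apply Hub; auto).
  assert (Hmb : m <= b) by (apply Hleast; intros x [Hx _]; lra).
  exists m. split; [lra|split].
  - intros t Ht. apply NNPP. intros Hn.
    assert (m <= t); [|lra]. apply Hleast. intros x [Hx Hrun].
    destruct (Rle_dec x t) as [|Hxt]; auto. exfalso. apply Hn, Hrun. lra.
  - intros Hm eta Heta. apply NNPP. intros Hn.
    set (x := Rmin b (m + eta / 2)).
    assert (x <= b) by apply Rmin_l. assert (x <= m + eta / 2) by apply Rmin_r.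
    assert (m < x) by (apply Rmin_glb_lt; lra).
    assert (E x); [|assert (x <= m) by (apply Hub; auto); lra].
    split; [lra|]. intros t Ht. apply NNPP. intros Hnt.
    destruct (Rlt_dec t m) as [Htm|Htm].
    + apply Hnt. destruct (classic (P t)) as [|HnP]; auto. exfalso.
      assert (m <= t); [|lra]. apply Hleast. intros y [Hy Hrun].
      destruct (Rle_dec y t) as [|Hyt]; auto. exfalso. apply HnP, Hrun. lra.
    + apply Hn. exists t. repeat split; auto; lra.
Qed.

Lemma first_zero (f : R -> R) a b : a < b ->
  (forall t, a <= t <= b -> continuity_pt f t) -> 0 < f a -> f b <= 0 ->
  exists tau, a < tau <= b /\ f tau = 0 /\ forall t, a <= t < tau -> 0 < f t.
Proof.
  intros Hab Hc Ha Hb.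
  destruct (sup_initial_run (fun t => 0 < f t) a b) as [m [Hm [Hrun Hnext]]]; [lra|].
  assert (Hle : f m <= 0).
  { destruct (Req_dec m b) as [->|Hmb]; auto.
    apply nonpos_of_right_points; [apply Hc; lra|]. intros eta Heta.
    destruct (Hnext ltac:(lra) eta Heta) as [t [Ht [_ Hnt]]]. exists t. split; lra. }
  assert (Ham : a < m) by (destruct (Req_dec a m) as [<-|]; lra).
  assert (Hge : 0 <= f m).
  { cut (- f m <= 0); [lra|]. apply (nonpos_of_left_run (fun t => - f t) a m Ham).
    - apply cont_opp, Hc; lra.
    - intros t Ht. pose proof (Hrun t Ht). lra. }
  exists m. repeat split; auto; lra.
Qed.

Lemma last_zero_before_positive (f : R -> R) a b : a < b ->
  (forall t, a <= t <= b -> continuity_pt f t) -> f a <= 0 -> 0 < f b ->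
  exists tau, a <= tau < b /\ f tau = 0 /\
    forall eta, 0 < eta -> exists t, tau <= t < tau + eta /\ t <= b /\ 0 < f t.
Proof.
  intros Hab Hc Ha Hb.
  destruct (sup_initial_run (fun t => f t <= 0) a b) as [m [Hm [Hrun Hnext]]]; [lra|].
  assert (Hle : f m <= 0).
  { destruct (Req_dec a m) as [<-|Ham]; auto.
    apply (nonpos_of_left_run f a m); [lra|apply Hc; lra|auto]. }
  assert (Hmb : m < b) by (destruct (Req_dec m b) as [->|]; lra).
  assert (Hge : 0 <= f m).
  { cut (- f m <= 0); [lra|]. apply (nonpos_of_right_points (fun t => - f t)).
    - apply cont_opp, Hc; lra.
    - intros eta Heta. destruct (Hnext Hmb eta Heta) as [t [Ht [_ Hnt]]]. exists t. split; lra. }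
  exists m. split; [lra|split; [lra|]].
  intros eta Heta. destruct (Hnext Hmb eta Heta) as [t [Ht [Htb Hnt]]].
  exists t. repeat split; lra.
Qed.

Lemma last_level_time (f : R -> R) a b v : a <= b ->
  (forall t, a <= t <= b -> continuity_pt f t) -> f a = v ->
  exists tau, a <= tau <= b /\ f tau = v /\ forall t, tau < t <= b -> f t <> v.
Proof.
  intros Hab Hc Ha.
  set (E := fun x => a <= x <= b /\ f x = v).
  destruct (completeness E) as [m [Hub Hleast]].
  { exists b. intros x [Hx _]. lra. }
  { exists a. split; [lra|auto]. }
  assert (Ham : a <= m) by (apply Hub; split; [lra|auto]).
  assert (Hmb : m <= b) by (apply Hleast; intros x [Hx _]; lra).
  exists m. split; [lra|split].
  - destruct (Req_dec (f m) v) as [|Hne]; auto. exfalso.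
    assert (He : 0 < Rabs (f m - v)) by (apply Rabs_pos_lt; lra).
    destruct (proj1 (continuity_pt_eps f m) (Hc m ltac:(lra)) _ He) as [d [Hd H]].
    assert (Hx : exists x, E x /\ m - d < x).
    { apply NNPP. intros Hn. assert (m <= m - d); [|lra]. apply Hleast. intros x Ex.
      destruct (Rle_dec x (m - d)) as [|Hx]; auto. exfalso. apply Hn. exists x. split; auto; lra. }
    destruct Hx as [x [[Hx Hfx] Hxd]].
    assert (x <= m) by (apply Hub; split; auto).
    pose proof (H x ltac:(rewrite Rabs_left1; lra)) as Hlt.
    rewrite Hfx, <- Rabs_Ropp in Hlt. replace (- (v - f m)) with (f m - v) in Hlt by ring. lra.
  - intros t Ht Hft. assert (t <= m) by (apply Hub; split; [lra|auto]). lra.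
Qed.

Lemma MVT_interior (F D : R -> R) a b : a < b ->
  (forall c, a <= c <= b -> continuity_pt F c) ->
  (forall c, a < c < b -> derivable_pt_lim F c (D c)) ->
  exists c, a < c < b /\ F b - F a = D c * (b - a).
Proof.
  intros Hab Hc Hd.
  assert (prF : forall c, a < c < b -> derivable_pt F c) by (intros c Hc'; exists (D c); exact (Hd c Hc')).
  assert (prid : forall c, a < c < b -> derivable_pt id c) by (intros; apply derivable_pt_id).
  destruct (MVT F id a b prF prid Hab Hc) as [c [Hc' E]].
  { intros; apply derivable_continuous_pt, derivable_pt_id. }
  rewrite (derive_pt_eq_0 _ _ _ (prF c Hc') (Hd c Hc')) in E.
  rewrite (derive_pt_eq_0 _ _ _ (prid c Hc') (derivable_pt_lim_id c)) in E.
  exists c. split; auto. unfold id in E. lra.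
Qed.

Lemma nonincreasing_off_list (F D : R -> R) (l : list R) a b : a <= b ->
  (forall c, a <= c <= b -> continuity_pt F c) ->
  (forall c, a < c < b -> ~ In c l -> derivable_pt_lim F c (D c) /\ D c <= 0) ->
  F b <= F a.
Proof.
  revert a b; induction l as [|p l IH]; intros a b Hab Hc Hd.
  - destruct (Req_dec a b) as [->|Hne]; [lra|].
    destruct (MVT_interior F D a b) as [c [Hc' E]]; try lra; auto.
    { intros c Hc'. apply Hd; auto. }
    destruct (Hd c Hc' (in_nil (a := c))). nra.
  - assert (Hsplit : forall a' b', a <= a' -> a' <= b' -> b' <= b -> ~ (a' < p < b') -> F b' <= F a').
    { intros a' b' Ha' Hab' Hb' Hp. apply IH; auto.
      - intros c Hc'; apply Hc; lra.
      - intros c Hc' Hn. apply Hd; [lra|]. intros [E|E]; [subst; lra|tauto]. }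
    destruct (classic (a < p < b)) as [Hp|Hp].
    + assert (F p <= F a) by (apply Hsplit; lra). assert (F b <= F p) by (apply Hsplit; lra). lra.
    + apply Hsplit; lra.
Qed.

Lemma strictly_decreasing (F D : R -> R) a b : a < b ->
  (forall c, a <= c <= b -> continuity_pt F c) ->
  (forall c, a < c < b -> derivable_pt_lim F c (D c) /\ D c < 0) ->
  F b < F a.
Proof.
  intros Hab Hc Hd. destruct (MVT_interior F D a b) as [c [Hc' E]]; auto.
  { intros c Hc'. apply Hd; auto. }
  destruct (Hd c Hc'). nra.
Qed.

Lemma Rabs_le_between x b : Rabs x <= b -> - b <= x <= b.
Proof. intros H. pose proof (Rle_abs x). pose proof (Rle_abs (- x)). rewrite Rabs_Ropp in *. lra. Qed.

Lemma one_sub_ratio_le x q r k : 0 < x -> x <= r -> r ^ 2 = x ^ 2 + q ^ 2 -> Rabs q <= k * x ->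
  0 <= 1 - x / r <= k.
Proof.
  intros Hx Hxr Hr Hq. assert (Hr0 : 0 < r) by lra.
  assert (Hrq : r <= x + Rabs q).
  { pose proof (Rabs_pos q). assert (Rabs q ^ 2 = q ^ 2) by (rewrite <- !Rsqr_pow2; symmetry; apply Rsqr_abs). nra. }
  replace (1 - x / r) with ((r - x) / r) by (field; lra).
  split; [apply Rmult_le_pos; [lra|apply Rlt_le, Rinv_0_lt_compat; lra]|].
  apply (Rmult_le_reg_r r); auto. unfold Rdiv. rewrite Rmult_assoc, Rinv_l by lra. nra.
Qed.

Lemma acos_le w e : 0 <= e <= PI -> cos e <= w <= 1 -> acos w <= e.
Proof.
  intros He Hw. pose proof (acos_bound w).
  destruct (Rle_dec (acos w) e) as [|Hn]; auto. exfalso.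
  assert (Hlt : cos (acos w) < cos e) by (apply cos_decreasing_1; lra).
  rewrite cos_acos in Hlt by (pose proof (COS_bound e); lra). lra.
Qed.

Lemma le_acos w e : 0 <= e <= PI -> -1 <= w <= cos e -> e <= acos w.
Proof.
  intros He Hw. pose proof (acos_bound w).
  destruct (Rle_dec e (acos w)) as [|Hn]; auto. exfalso.
  assert (Hlt : cos e < cos (acos w)) by (apply cos_decreasing_1; lra).
  rewrite cos_acos in Hlt by (pose proof (COS_bound e); lra). lra.
Qed.

Lemma mul_cos_lt_sin g : 0 < g < PI / 2 -> g * cos g < sin g.
Proof.
  intros Hg.
  destruct (MVT_cor2 (fun x => sin x - x * cos x) (fun x => x * sin x) 0 g) as [c [E Hc]]; [lra| |].
  - intros c _. apply (derivable_pt_lim_ext (fun x => sin x - x * cos x)); [reflexivity|].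
    replace (c * sin c) with (cos c - (1 * cos c + c * - sin c)) by ring.
    apply dlim_minus; [apply derivable_pt_lim_sin|].
    apply dlim_mult; [apply derivable_pt_lim_id|apply derivable_pt_lim_cos].
  - rewrite sin_0, cos_0 in E. assert (0 < sin c) by (apply sin_gt_0; pose proof PI2_1; lra).
    assert (0 < c * sin c * (g - 0)) by (repeat apply Rmult_lt_0_compat; lra). lra.
Qed.

(** * Trajectories of the control system *)

Definition clamp (T t : R) : R := Rmax 0 (Rmin T t).

Lemma clamp_in T t : 0 <= T -> 0 <= clamp T t <= T.
Proof. intros H. unfold clamp. split; [apply Rmax_l|]. apply Rmax_lub; [lra|apply Rmin_l]. Qed.

Lemma clamp_id T t : 0 <= t <= T -> clamp T t = t.
Proof. intros H. unfold clamp. rewrite Rmin_right by lra. rewrite Rmax_right; lra. Qed.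

Lemma clamp_lipschitz T x y : 0 <= T -> Rabs (clamp T y - clamp T x) <= Rabs (y - x).
Proof.
  intros HT. unfold clamp, Rmax, Rmin.
  repeat destruct Rle_dec; unfold Rabs; repeat destruct Rcase_abs; lra.
Qed.

Lemma smooth_on_constant_arc (A : R -> bool) T a b v t :
  0 <= a -> b <= T -> (forall y, a < y < b -> A y = v) -> a < t < b ->
  0 < t < T /\ ~ switching_time A T t.
Proof.
  intros Ha Hb Harc Ht. split; [lra|]. intros [_ Hn]. apply Hn.
  exists (Rmin (t - a) (b - t)). split; [apply Rmin_glb_lt; lra|].
  assert (Rmin (t - a) (b - t) <= t - a) by apply Rmin_l.
  assert (Rmin (t - a) (b - t) <= b - t) by apply Rmin_r.
  intros y _ Hy. rewrite !Harc; auto; unfold Rabs in Hy; destruct Rcase_abs in Hy; lra.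
Qed.

Section Trajectory.

Variables (g T : R) (A : R -> bool) (psi : R -> vec).
Hypothesis Hg : 0 < g < PI / 2.
Hypothesis Hadm : admissible g T A psi.

(* [psi] extended by constants outside [0, T], so that continuity relative to
   [0, T] becomes [continuity_pt]. *)
Definition coord (i : nat) (t : R) : R := psi (clamp T t) i.

(* Coordinates in the orthonormal frame e1, psi0, (0, cos g, - sin g). *)
Definition psi_e1 (t : R) : R := coord 0 t.
Definition psi_along (t : R) : R := sin g * coord 1 t + cos g * coord 2 t.
Definition psi_perp (t : R) : R := cos g * coord 1 t - sin g * coord 2 t.

Definition smooth_time (t : R) : Prop := 0 < t < T /\ ~ switching_time A T t.

Lemma sin_cos_pos : 0 < sin g /\ 0 < cos g.
Proof. split; [apply sin_gt_0|apply cos_gt_0]; lra. Qed.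

Lemma sin_sqr_add_cos_sqr : sin g ^ 2 + cos g ^ 2 = 1.
Proof. pose proof (sin2_cos2 g) as E. unfold Rsqr in E. lra. Qed.

Lemma T_nonneg : 0 <= T.
Proof. apply Hadm. Qed.

Lemma coord_eq i t : 0 <= t <= T -> coord i t = psi t i.
Proof. intros Ht. unfold coord. rewrite clamp_id; auto. Qed.

Lemma coord_clamp i t : coord i (clamp T t) = coord i t.
Proof. unfold coord. rewrite (clamp_id T (clamp T t)); auto. apply clamp_in, T_nonneg. Qed.

Lemma coord_cont i t : (i < 3)%nat -> continuity_pt (coord i) t.
Proof.
  intros Hi. destruct Hadm as [HT [_ [[Hv _] _]]].
  apply continuity_pt_eps. intros e He.
  destruct (Hv i (clamp T t) e Hi (clamp_in T t HT) He) as [d [Hd H]].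
  exists d. split; auto. intros y Hy. apply H; [apply clamp_in; auto|].
  eapply Rle_lt_trans; [apply clamp_lipschitz|]; auto.
Qed.

Lemma coord_deriv i t : smooth_time t -> (i < 3)%nat ->
  derivable_pt_lim (coord i) t (mv (matA g (A t)) (psi t) i).
Proof.
  destruct Hadm as [_ [_ [[_ Hs] _]]]. intros [Ht Hn] Hi.
  apply (derivable_pt_lim_locally_ext (fun s => psi s i) _ t 0 T); auto.
  intros z Hz. rewrite coord_eq; auto; lra.
Qed.

Lemma psi_e1_cont t : continuity_pt psi_e1 t.
Proof. apply coord_cont; lia. Qed.

Lemma psi_along_cont t : continuity_pt psi_along t.
Proof. apply cont_plus; apply cont_scal, coord_cont; lia. Qed.

Lemma psi_perp_cont t : continuity_pt psi_perp t.
Proof. apply cont_minus; apply cont_scal, coord_cont; lia. Qed.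

Definition e1_rate (t : R) : R :=
  sin g * psi_along t + (if A t then 0 else cos g * psi_perp t).

Lemma psi_e1_deriv t : smooth_time t -> derivable_pt_lim psi_e1 t (e1_rate t).
Proof.
  intros Ht. assert (Ht' : 0 <= t <= T) by (destruct Ht; lra).
  apply (derivable_pt_lim_ext (coord 0)); [reflexivity|].
  replace (e1_rate t) with (mv (matA g (A t)) (psi t) 0%nat); [apply coord_deriv; auto; lia|].
  unfold e1_rate, psi_along, psi_perp. rewrite !coord_eq by auto.
  pose proof sin_sqr_add_cos_sqr as E.
  unfold mv, matA, matX, matY. destruct (A t); simpl.
  - ring.
  - transitivity ((sin g ^ 2 + cos g ^ 2) * psi t 1%nat); [rewrite E|]; ring.
Qed.

Lemma psi_along_deriv t : smooth_time t ->
  derivable_pt_lim psi_along t (- sin g * psi_e1 t).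
Proof.
  intros Ht. assert (Ht' : 0 <= t <= T) by (destruct Ht; lra).
  replace (- sin g * psi_e1 t) with
    (sin g * mv (matA g (A t)) (psi t) 1%nat + cos g * mv (matA g (A t)) (psi t) 2%nat).
  { apply dlim_plus; apply dlim_scal, coord_deriv; auto. }
  unfold psi_e1. rewrite coord_eq by auto. pose proof sin_sqr_add_cos_sqr as E.
  unfold mv, matA, matX, matY. destruct (A t); simpl.
  - transitivity (- sin g * (sin g ^ 2 + cos g ^ 2) * psi t 0%nat); [ring|rewrite E; ring].
  - ring.
Qed.

Lemma psi_perp_deriv t : smooth_time t ->
  derivable_pt_lim psi_perp t (if A t then 0 else - cos g * psi_e1 t).
Proof.
  intros Ht. assert (Ht' : 0 <= t <= T) by (destruct Ht; lra).
  replace (if A t then 0 else - cos g * psi_e1 t) with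
    (cos g * mv (matA g (A t)) (psi t) 1%nat - sin g * mv (matA g (A t)) (psi t) 2%nat).
  { apply dlim_minus; apply dlim_scal, coord_deriv; auto. }
  unfold psi_e1. rewrite coord_eq by auto.
  unfold mv, matA, matX, matY. destruct (A t); simpl; ring.
Qed.

Lemma nonincreasing_on (F D : R -> R) a b : 0 <= a -> a <= b -> b <= T ->
  (forall c, a <= c <= b -> continuity_pt F c) ->
  (forall c, a < c < b -> smooth_time c -> derivable_pt_lim F c (D c) /\ D c <= 0) ->
  F b <= F a.
Proof.
  destruct Hadm as [_ [[l Hl] _]]. intros Ha Hab Hb Hc Hd.
  apply (nonincreasing_off_list F D l a b Hab Hc).
  intros c Hc' Hn. apply Hd; auto. split; [lra|]. intros Hsw. apply Hn, Hl, Hsw.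
Qed.

Lemma increment_le (F D G E : R -> R) a b : 0 <= a -> a <= b -> b <= T ->
  (forall c, a <= c <= b -> continuity_pt F c) ->
  (forall c, a <= c <= b -> continuity_pt G c) ->
  (forall c, a < c < b -> smooth_time c -> derivable_pt_lim F c (D c)) ->
  (forall c, a < c < b -> derivable_pt_lim G c (E c)) ->
  (forall c, a < c < b -> smooth_time c -> D c <= E c) ->
  F b - F a <= G b - G a.
Proof.
  intros Ha Hab Hb HcF HcG HdF HdG Hle.
  cut (F b - G b <= F a - G a); [lra|].
  apply (nonincreasing_on (fun t => F t - G t) (fun t => D t - E t)); auto.
  - intros c Hc. apply cont_minus; auto.
  - intros c Hc Hs. split; [apply dlim_minus; auto|]. pose proof (Hle c Hc Hs). lra.
Qed.

Lemma increment_abs_le (F D G E : R -> R) a b : 0 <= a -> a <= b -> b <= T ->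
  (forall c, a <= c <= b -> continuity_pt F c) ->
  (forall c, a <= c <= b -> continuity_pt G c) ->
  (forall c, a < c < b -> smooth_time c -> derivable_pt_lim F c (D c)) ->
  (forall c, a < c < b -> derivable_pt_lim G c (E c)) ->
  (forall c, a < c < b -> smooth_time c -> Rabs (D c) <= E c) ->
  Rabs (F b - F a) <= G b - G a.
Proof.
  intros Ha Hab Hb HcF HcG HdF HdG Hle. apply Rabs_le. split.
  - cut ((fun t => - F t) b - (fun t => - F t) a <= G b - G a); [simpl; lra|].
    apply (increment_le _ (fun t => - D t) G E); auto.
    + intros c Hc. apply cont_opp; auto.
    + intros c Hc Hs. apply dlim_opp; auto.
    + intros c Hc Hs. pose proof (Hle c Hc Hs). pose proof (Rabs_Ropp (D c)). pose proof (Rle_abs (- D c)). lra.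
  - apply (increment_le F D G E); auto.
    intros c Hc Hs. pose proof (Hle c Hc Hs). pose proof (Rle_abs (D c)). lra.
Qed.

Lemma frame_at_start : psi_e1 0 = 0 /\ psi_along 0 = 1 /\ psi_perp 0 = 0.
Proof.
  destruct Hadm as [HT [_ [_ [H0 _]]]].
  unfold psi_e1, psi_along, psi_perp. rewrite !coord_eq, !H0 by lra. unfold psi0; simpl.
  pose proof sin_sqr_add_cos_sqr. repeat split; lra.
Qed.

Lemma frame_norm t : psi_e1 t ^ 2 + psi_along t ^ 2 + psi_perp t ^ 2 = 1.
Proof.
  set (N := fun y => psi_e1 y ^ 2 + psi_along y ^ 2 + psi_perp y ^ 2).
  assert (Hc : forall y, continuity_pt N y).
  { intros y. unfold N. repeat apply cont_plus; apply cont_sqr;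
      apply psi_e1_cont || apply psi_along_cont || apply psi_perp_cont. }
  assert (Hd : forall y, smooth_time y -> derivable_pt_lim N y 0).
  { intros y Hy. unfold N.
    apply (derivable_pt_lim_ext (fun z => psi_e1 z ^ 2 + psi_along z ^ 2 + psi_perp z ^ 2)); [reflexivity|].
    replace 0 with (2 * psi_e1 y * e1_rate y + 2 * psi_along y * (- sin g * psi_e1 y)
      + 2 * psi_perp y * (if A y then 0 else - cos g * psi_e1 y))
      by (unfold e1_rate; destruct (A y); ring).
    repeat apply dlim_plus; apply dlim_sqr;
      [apply psi_e1_deriv|apply psi_along_deriv|apply psi_perp_deriv]; auto. }
  assert (Hconst : forall u, 0 <= u <= T -> N u = N 0).
  { intros u Hu.
    assert (Hinc : Rabs (N u - N 0) <= 0 - 0).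
    { apply (increment_abs_le N (fun _ => 0) (fun _ => 0) (fun _ => 0)); auto; try lra.
      - intros; apply cont_const.
      - intros; apply derivable_pt_lim_const.
      - intros; rewrite Rabs_R0; lra. }
    apply Rabs_le_between in Hinc. lra. }
  assert (N 0 = 1) by (unfold N; destruct frame_at_start as [-> [-> ->]]; ring).
  assert (E : N t = N (clamp T t)) by (unfold N, psi_e1, psi_along, psi_perp; rewrite !coord_clamp; auto).
  change (N t = 1). rewrite E, Hconst; auto. apply clamp_in, T_nonneg.
Qed.

Lemma frame_bounds t :
  -1 <= psi_e1 t <= 1 /\ -1 <= psi_along t <= 1 /\ -1 <= psi_perp t <= 1.
Proof. pose proof (frame_norm t). repeat split; nra. Qed.

Lemma coord2_frame t : coord 2 t = cos g * psi_along t - sin g * psi_perp t.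
Proof.
  pose proof sin_sqr_add_cos_sqr as E. unfold psi_along, psi_perp.
  transitivity ((sin g ^ 2 + cos g ^ 2) * coord 2 t); [rewrite E|]; ring.
Qed.

Lemma frame_at_along_one t : psi_along t = 1 -> psi_e1 t = 0 /\ psi_perp t = 0.
Proof. intros Hw. pose proof (frame_norm t) as N. rewrite Hw in N. split; nra. Qed.

Lemma first_hit : exists T1, 0 < T1 <= T /\ coord 2 T1 = 0 /\
  forall t, 0 <= t < T1 -> 0 < coord 2 t.
Proof.
  destruct sin_cos_pos as [Hs Hc]. pose proof T_nonneg as HT.
  assert (H0 : coord 2 0 = cos g).
  { destruct Hadm as [_ [_ [_ [H0 _]]]]. rewrite coord_eq, H0 by lra. reflexivity. }
  assert (HTz : coord 2 T = 0).
  { destruct Hadm as [_ [_ [_ [_ HS]]]]. rewrite coord_eq by lra.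
    unfold inSigma, ip, e3 in HS. simpl in HS. lra. }
  assert (HT' : 0 < T) by (destruct (Req_dec T 0) as [E|]; [rewrite E in HTz; lra|lra]).
  destruct (first_zero (coord 2) 0 T) as [T1 HT1]; try lra.
  - intros; apply coord_cont; lia.
  - exists T1; exact HT1.
Qed.

Definition angle (t : R) : R := acos (psi_along t).
Definition rho (t : R) : R := sqrt (1 - (psi_along t)²).

(* Lyapunov function for arcs that stay in the half-space psi_along > 0: it vanishes at
   psi0, grows at most at unit speed, and equals angle / sin g + 1 / cos g at points where
   psi_perp = 0 and psi_e1 < 0. *)
Definition lyap (t : R) : R :=
  angle t / sin g + (1 - psi_e1 t / rho t) ^ 2 / (4 * cos g).

Definition rho_rate (t : R) : R := sin g * psi_e1 t * psi_along t / rho t.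
Definition ratio_rate (t : R) : R := (e1_rate t * rho t - rho_rate t * psi_e1 t) / (rho t)².
Definition lyap_rate (t : R) : R :=
  psi_e1 t / rho t - (1 - psi_e1 t / rho t) * ratio_rate t / (2 * cos g).

Lemma rho_pos t : -1 < psi_along t < 1 -> 0 < rho t.
Proof. intros H. apply sqrt_lt_R0. unfold Rsqr. nra. Qed.

Lemma rho_sqr t : rho t ^ 2 = psi_e1 t ^ 2 + psi_perp t ^ 2.
Proof.
  pose proof (frame_norm t). pose proof (frame_bounds t).
  unfold rho. rewrite pow2_sqrt; unfold Rsqr; nra.
Qed.

Lemma e1_le_rho t : psi_e1 t <= rho t.
Proof.
  pose proof (rho_sqr t). assert (0 <= rho t) by apply sqrt_pos. nra.
Qed.

Lemma angle_cont t : -1 < psi_along t < 1 -> continuity_pt angle t.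
Proof.
  intros Hw. apply (cont_comp psi_along acos); [apply psi_along_cont|].
  apply derivable_continuous_pt, derivable_pt_acos; auto.
Qed.

Lemma angle_deriv t : smooth_time t -> -1 < psi_along t < 1 ->
  derivable_pt_lim angle t (sin g * psi_e1 t / rho t).
Proof.
  intros Ht Hw. pose proof (rho_pos t Hw).
  replace (sin g * psi_e1 t / rho t) with ((-1 / sqrt (1 - (psi_along t)²)) * (- sin g * psi_e1 t))
    by (unfold rho in *; field; lra).
  apply (dlim_comp psi_along acos); [apply psi_along_deriv; auto|].
  apply (derive_pt_eq_1 _ _ _ (derivable_pt_acos _ Hw)), derive_pt_acos.
Qed.

Lemma rho_cont t : -1 < psi_along t < 1 -> continuity_pt rho t.
Proof.
  intros Hw. apply (cont_comp (fun y => 1 - (psi_along y)²) sqrt).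
  - apply cont_minus; [apply cont_const|apply cont_mult; apply psi_along_cont].
  - apply continuity_pt_sqrt. unfold Rsqr; nra.
Qed.

Lemma rho_deriv t : smooth_time t -> -1 < psi_along t < 1 -> derivable_pt_lim rho t (rho_rate t).
Proof.
  intros Ht Hw. pose proof (rho_pos t Hw).
  replace (rho_rate t) with
    (/ (2 * sqrt (1 - (psi_along t)²)) * (0 - (- sin g * psi_e1 t * psi_along t + psi_along t * (- sin g * psi_e1 t))))
    by (unfold rho_rate, rho in *; field; lra).
  apply (dlim_comp (fun y => 1 - (psi_along y)²) sqrt).
  - apply dlim_minus; [apply derivable_pt_lim_const|apply dlim_mult; apply psi_along_deriv; auto].
  - apply derivable_pt_lim_sqrt. unfold Rsqr; nra.
Qed.

Lemma lyap_cont t : -1 < psi_along t < 1 -> continuity_pt lyap t.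
Proof.
  intros Hw. destruct sin_cos_pos as [Hs Hc]. pose proof (rho_pos t Hw).
  apply cont_plus.
  - apply (continuity_pt_locally_ext (fun y => / sin g * angle y) _ 1); [lra|intros; unfold Rdiv; ring|].
    apply cont_scal, angle_cont; auto.
  - apply (continuity_pt_locally_ext (fun y => / (4 * cos g) * (1 - psi_e1 y / rho y) ^ 2) _ 1);
      [lra|intros; unfold Rdiv; ring|].
    apply cont_scal, cont_sqr, cont_minus; [apply cont_const|].
    apply cont_div; [apply psi_e1_cont|apply rho_cont; auto|lra].
Qed.

Lemma lyap_deriv t : smooth_time t -> -1 < psi_along t < 1 -> derivable_pt_lim lyap t (lyap_rate t).
Proof.
  intros Ht Hw. destruct sin_cos_pos as [Hs Hc]. pose proof (rho_pos t Hw).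
  apply (derivable_pt_lim_ext (fun y => / sin g * angle y + / (4 * cos g) * (1 - psi_e1 y / rho y) ^ 2));
    [intros; unfold lyap, Rdiv; ring|].
  replace (lyap_rate t) with (/ sin g * (sin g * psi_e1 t / rho t)
    + / (4 * cos g) * (2 * (1 - psi_e1 t / rho t) * (0 - ratio_rate t)))
    by (unfold lyap_rate; field; lra).
  apply dlim_plus; apply dlim_scal; [apply angle_deriv; auto|].
  apply (dlim_sqr (fun y => 1 - psi_e1 y / rho y)), dlim_minus; [apply derivable_pt_lim_const|].
  apply dlim_div; [apply psi_e1_deriv|apply rho_deriv|]; auto; lra.
Qed.

Lemma lyap_rate_le_one t : 0 < psi_along t < 1 -> lyap_rate t <= 1.
Proof.
  intros Hw. destruct sin_cos_pos as [Hs Hc].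
  assert (Hr : 0 < rho t) by (apply rho_pos; lra). pose proof (rho_sqr t) as Hn.
  set (x := psi_e1 t / rho t). set (y := psi_perp t / rho t).
  assert (Ex : psi_e1 t = x * rho t) by (unfold x; field; lra).
  assert (Ey : psi_perp t = y * rho t) by (unfold y; field; lra).
  assert (Hxy : x ^ 2 + y ^ 2 = 1).
  { apply (Rmult_eq_reg_r (rho t ^ 2)); [|nra].
    transitivity (psi_e1 t ^ 2 + psi_perp t ^ 2); [rewrite Ex, Ey; ring|rewrite <- Hn; ring]. }
  assert (Hk : 0 <= sin g * psi_along t * y ^ 2 / (2 * cos g * rho t)).
  { apply Rmult_le_pos; [apply Rmult_le_pos; [apply Rmult_le_pos; lra|apply pow2_ge_0]|].
    apply Rlt_le, Rinv_0_lt_compat. nra. }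
  assert (Hx : x <= 1) by nra. assert (Hy : -1 <= y) by nra.
  assert (E : lyap_rate t = x - (1 - x) * (sin g * psi_along t * y ^ 2 / (2 * cos g * rho t))
                - (if A t then 0 else (1 - x) * y / 2)).
  { unfold lyap_rate, ratio_rate, rho_rate, e1_rate. fold x.
    replace (y ^ 2) with (1 - x ^ 2) by lra. rewrite Ex.
    destruct (A t); [|rewrite Ey]; unfold Rsqr; field; lra. }
  assert (0 <= (1 - x) * (sin g * psi_along t * y ^ 2 / (2 * cos g * rho t))) by (apply Rmult_le_pos; lra).
  assert (0 <= (1 - x) * (1 + y)) by (apply Rmult_le_pos; lra).
  rewrite E. destruct (A t); lra.
Qed.

Lemma angle_le_lyap t : angle t <= sin g * lyap t.
Proof.
  destruct sin_cos_pos as [Hs Hc]. unfold lyap.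
  set (K := (1 - psi_e1 t / rho t) ^ 2 / (4 * cos g)).
  assert (0 <= K) by (apply Rmult_le_pos; [apply pow2_ge_0|apply Rlt_le, Rinv_0_lt_compat; lra]).
  replace (sin g * (angle t / sin g + K)) with (angle t + sin g * K) by (field; lra).
  nra.
Qed.

(** * Motion after the last departure from psi0 *)

Section Departure.

Variables T1 t0 : R.
Hypothesis HT1 : 0 < T1 <= T.
Hypothesis Hhit : coord 2 T1 = 0.
Hypothesis Hbefore : forall t, 0 <= t < T1 -> 0 < coord 2 t.
Hypothesis Ht0 : 0 <= t0 < T1.
Hypothesis Hdepart : psi_along t0 = 1.
Hypothesis Hnot_back : forall t, t0 < t <= T1 -> psi_along t <> 1.

Lemma along_range t : t0 < t <= T1 -> -1 < psi_along t < 1.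
Proof.
  intros Ht. destruct sin_cos_pos as [Hs Hc].
  pose proof (frame_bounds t) as [_ [Hb _]]. pose proof (Hnot_back t Ht).
  split; [|lra]. destruct (Req_dec (psi_along t) (-1)) as [E|]; [|lra]. exfalso.
  pose proof (frame_norm t) as N. rewrite E in N. assert (Eq : psi_perp t = 0) by nra.
  assert (Hz : 0 <= coord 2 t).
  { destruct (Req_dec t T1) as [->|]; [lra|]. apply Rlt_le, Hbefore. lra. }
  rewrite coord2_frame, E, Eq in Hz. lra.
Qed.

Lemma along_at_hit_le : psi_along T1 <= sin g.
Proof.
  destruct sin_cos_pos as [Hs Hc]. pose proof (frame_norm T1) as N.
  pose proof sin_sqr_add_cos_sqr as E. rewrite coord2_frame in Hhit.
  assert (Eq : sin g * psi_perp T1 = cos g * psi_along T1) by lra.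
  assert (psi_along T1 ^ 2 <= sin g ^ 2).
  { apply (Rmult_le_reg_l (sin g ^ 2)); [nra|].
    assert (sin g ^ 2 * psi_perp T1 ^ 2 = cos g ^ 2 * psi_along T1 ^ 2)
      by (replace (sin g ^ 2 * psi_perp T1 ^ 2) with ((sin g * psi_perp T1) ^ 2) by ring; rewrite Eq; ring).
    nra. }
  nra.
Qed.

Lemma e1_near_departure t : t0 <= t <= T1 -> Rabs (psi_e1 t) <= 2 * (t - t0).
Proof.
  intros Ht. destruct sin_cos_pos as [Hs Hc]. pose proof sin_sqr_add_cos_sqr.
  destruct (frame_at_along_one t0 Hdepart) as [E0 _].
  replace (psi_e1 t) with (psi_e1 t - psi_e1 t0) by lra.
  replace (2 * (t - t0)) with (2 * t - 2 * t0) by ring.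
  apply (increment_abs_le psi_e1 e1_rate (fun y => 2 * y) (fun _ => 2 * 1)); try lra.
  - intros; apply psi_e1_cont.
  - intros; apply cont_scal, cont_id.
  - intros c _ Hs'. apply psi_e1_deriv; auto.
  - intros; apply dlim_scal, derivable_pt_lim_id.
  - intros c _ _. pose proof (frame_bounds c) as [_ [Hw Hq]]. unfold e1_rate.
    assert (sin g <= 1) by nra. assert (cos g <= 1) by nra.
    apply Rabs_le. destruct (A c); split; nra.
Qed.

Lemma perp_near_departure t : t0 <= t <= T1 -> Rabs (psi_perp t) <= cos g * (t - t0) ^ 2.
Proof.
  intros Ht. destruct sin_cos_pos as [Hs Hc].
  destruct (frame_at_along_one t0 Hdepart) as [_ E0].
  replace (psi_perp t) with (psi_perp t - psi_perp t0) by lra.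
  replace (cos g * (t - t0) ^ 2) with (cos g * (t - t0) ^ 2 - cos g * (t0 - t0) ^ 2) by ring.
  apply (increment_abs_le psi_perp (fun y => if A y then 0 else - cos g * psi_e1 y)
    (fun y => cos g * (y - t0) ^ 2) (fun y => 2 * cos g * (y - t0))); try lra.
  - intros; apply psi_perp_cont.
  - intros; apply cont_scaled_sqr.
  - intros c _ Hs'. apply psi_perp_deriv; auto.
  - intros; apply dlim_scaled_sqr.
  - intros c Hc' _. pose proof (e1_near_departure c ltac:(lra)).
    destruct (A c); [rewrite Rabs_R0; nra|].
    rewrite Rabs_mult, Rabs_Ropp, (Rabs_right (cos g)) by lra. nra.
Qed.

Lemma along_near_departure t : t0 <= t <= T1 -> 1 - sin g * (t - t0) ^ 2 <= psi_along t.
Proof.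
  intros Ht. destruct sin_cos_pos as [Hs Hc].
  cut (- psi_along t - - psi_along t0 <= sin g * (t - t0) ^ 2 - sin g * (t0 - t0) ^ 2); [lra|].
  apply (increment_le (fun y => - psi_along y) (fun y => sin g * psi_e1 y)
    (fun y => sin g * (y - t0) ^ 2) (fun y => 2 * sin g * (y - t0))); try lra.
  - intros; apply cont_opp, psi_along_cont.
  - intros; apply cont_scaled_sqr.
  - intros c _ Hs'. replace (sin g * psi_e1 c) with (- (- sin g * psi_e1 c)) by ring.
    apply dlim_opp, psi_along_deriv; auto.
  - intros; apply dlim_scaled_sqr.
  - intros c Hc' _. pose proof (e1_near_departure c ltac:(lra)). pose proof (Rle_abs (psi_e1 c)). nra.
Qed.

Lemma e1_lower_near_departure t : t0 <= t <= T1 -> (t - t0) ^ 2 <= sin g / 2 ->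
  sin g / 2 * (t - t0) <= psi_e1 t.
Proof.
  intros Ht Hsmall. destruct sin_cos_pos as [Hs Hc]. pose proof sin_sqr_add_cos_sqr.
  destruct (frame_at_along_one t0 Hdepart) as [E0 _].
  cut (- psi_e1 t - - psi_e1 t0 <= - (sin g / 2) * t - - (sin g / 2) * t0); [lra|].
  apply (increment_le (fun y => - psi_e1 y) (fun y => - e1_rate y)
    (fun y => - (sin g / 2) * y) (fun _ => - (sin g / 2) * 1)); try lra.
  - intros; apply cont_opp, psi_e1_cont.
  - intros; apply cont_scal, cont_id.
  - intros c _ Hs'. apply dlim_opp, psi_e1_deriv; auto.
  - intros; apply dlim_scal, derivable_pt_lim_id.
  - intros c Hc' _.
    pose proof (perp_near_departure c ltac:(lra)) as Hq. apply Rabs_le_between in Hq.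
    pose proof (along_near_departure c ltac:(lra)) as Hw.
    assert ((c - t0) ^ 2 <= sin g / 2) by (eapply Rle_trans; [|apply Hsmall]; apply pow_incr; lra).
    unfold e1_rate. destruct (A c); nra.
Qed.

Lemma perp_nonpos_near_departure t : t0 <= t <= T1 -> (t - t0) ^ 2 <= sin g / 2 -> psi_perp t <= 0.
Proof.
  intros Ht Hsmall. destruct sin_cos_pos as [Hs Hc].
  destruct (frame_at_along_one t0 Hdepart) as [_ E0]. rewrite <- E0.
  apply (nonincreasing_on psi_perp (fun y => if A y then 0 else - cos g * psi_e1 y)); try lra.
  - intros; apply psi_perp_cont.
  - intros c Hc' Hs'. split; [apply psi_perp_deriv; auto|].
    assert (Hc2 : (c - t0) ^ 2 <= sin g / 2) by (eapply Rle_trans; [|apply Hsmall]; apply pow_incr; lra).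
    pose proof (e1_lower_near_departure c ltac:(lra) Hc2).
    assert (0 <= sin g / 2 * (c - t0)) by (apply Rmult_le_pos; lra).
    destruct (A c); nra.
Qed.

Lemma perp_neg_on_Y_arc t : t0 < t <= T1 -> (t - t0) ^ 2 <= sin g / 2 ->
  (forall y, t0 < y < t -> A y = false) -> psi_perp t < 0.
Proof.
  intros Ht Hsmall Harc. destruct sin_cos_pos as [Hs Hc].
  destruct (frame_at_along_one t0 Hdepart) as [_ E0]. rewrite <- E0.
  apply (strictly_decreasing psi_perp (fun y => - cos g * psi_e1 y)); [lra| |].
  - intros; apply psi_perp_cont.
  - intros c Hc'. assert (Hsc : smooth_time c) by (apply (smooth_on_constant_arc A T t0 t false); lra || auto).
    split.
    + pose proof (psi_perp_deriv c Hsc) as D. rewrite Harc in D; auto.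
    + assert (Hc2 : (c - t0) ^ 2 <= sin g / 2) by (eapply Rle_trans; [|apply Hsmall]; apply pow_incr; lra).
      pose proof (e1_lower_near_departure c ltac:(lra) Hc2).
      assert (0 < sin g / 2 * (c - t0)) by (apply Rmult_lt_0_compat; lra). nra.
Qed.

Lemma angle_lipschitz a b : t0 < a -> a <= b -> b <= T1 ->
  angle b - angle a <= sin g * (b - a).
Proof.
  intros Ha Hab Hb. destruct sin_cos_pos as [Hs Hc].
  replace (sin g * (b - a)) with (sin g * b - sin g * a) by ring.
  apply (increment_le angle (fun y => sin g * psi_e1 y / rho y) (fun y => sin g * y) (fun _ => sin g * 1));
    try lra.
  - intros c Hc'. apply angle_cont, along_range; lra.
  - intros; apply cont_scal, cont_id.
  - intros c Hc' Hs'. apply angle_deriv; auto. apply along_range; lra.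
  - intros; apply dlim_scal, derivable_pt_lim_id.
  - intros c Hc' _. pose proof (rho_pos c (along_range c ltac:(lra))).
    pose proof (e1_le_rho c).
    apply (Rmult_le_reg_r (rho c)); auto. unfold Rdiv. rewrite Rmult_assoc, Rinv_l by lra. nra.
Qed.

Lemma lyap_lipschitz a b : t0 < a -> a <= b -> b <= T1 ->
  (forall y, a <= y <= b -> 0 < psi_along y) -> lyap b - lyap a <= b - a.
Proof.
  intros Ha Hab Hb Hpos.
  apply (increment_le lyap lyap_rate (fun y => y) (fun _ => 1)); try lra.
  - intros c Hc'. apply lyap_cont, along_range; lra.
  - intros; apply cont_id.
  - intros c Hc' Hs'. apply lyap_deriv; auto. apply along_range; lra.
  - intros; apply derivable_pt_lim_id.
  - intros c Hc' _. apply lyap_rate_le_one. split; [apply Hpos; lra|apply along_range; lra].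
Qed.

(* Near the departure psi_e1 grows linearly while psi_perp and 1 - psi_along are quadratic. *)
Lemma lyap_near_departure t : t0 < t <= T1 -> (t - t0) ^ 2 <= sin g / 2 ->
  lyap t <= acos (1 - sin g * (t - t0) ^ 2) / sin g + cos g * (t - t0) ^ 2 / sin g ^ 2.
Proof.
  intros Ht Hsmall. destruct sin_cos_pos as [Hs Hc]. pose proof sin_sqr_add_cos_sqr.
  assert (Ht' : t0 <= t <= T1) by lra.
  pose proof (Rabs_le_between _ _ (perp_near_departure _ Ht')) as Hq.
  pose proof (along_near_departure _ Ht') as Hwl.
  pose proof (e1_lower_near_departure _ Ht' Hsmall) as Hx.
  pose proof (frame_bounds t) as [_ [Hw _]].
  set (u := t - t0) in *. assert (Hu : 0 < u) by (unfold u; lra).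
  set (x := psi_e1 t) in *. set (q := psi_perp t) in *. set (r := rho t).
  assert (Hxpos : 0 < x) by nra.
  assert (Hangle : angle t <= acos (1 - sin g * u ^ 2)).
  { apply acos_le; [apply acos_bound|]. rewrite cos_acos; [lra|]. split; nra. }
  set (k := 2 * cos g * u / sin g).
  assert (Hk : 0 <= k) by (unfold k; apply Rmult_le_pos; [nra|apply Rlt_le, Rinv_0_lt_compat; lra]).
  assert (Hqx : Rabs q <= k * x).
  { replace (cos g * u ^ 2) with (k * (sin g / 2 * u)) in Hq by (unfold k; field; lra).
    apply Rabs_le. split; nra. }
  destruct (one_sub_ratio_le x q r k Hxpos (e1_le_rho _) (rho_sqr t) Hqx) as [D0 D1].
  assert (Hdefect : (1 - x / r) ^ 2 / (4 * cos g) <= cos g * u ^ 2 / sin g ^ 2).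
  { replace (cos g * u ^ 2 / sin g ^ 2) with (k ^ 2 / (4 * cos g)) by (unfold k; field; lra).
    apply Rmult_le_compat_r; [apply Rlt_le, Rinv_0_lt_compat; lra|apply pow_incr; lra]. }
  assert (angle t / sin g <= acos (1 - sin g * u ^ 2) / sin g)
    by (apply Rmult_le_compat_r; [apply Rlt_le, Rinv_0_lt_compat|]; lra).
  unfold lyap. fold x r. lra.
Qed.

Lemma lyap_small_near_departure e h : 0 < e -> 0 < h ->
  exists t, t0 < t <= t0 + h /\ t <= T1 /\ lyap t <= e.
Proof.
  intros He Hh. destruct sin_cos_pos as [Hs Hc].
  set (e1 := Rmin (sin g * e / 2) 1).
  assert (He1 : 0 < e1 <= 1) by (split; [apply Rmin_glb_lt; nra|apply Rmin_r]).
  assert (He1' : e1 <= sin g * e / 2) by apply Rmin_l.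
  assert (Hcos : cos e1 < 1) by (rewrite <- cos_0; apply cos_decreasing_1; pose proof PI2_1; lra).
  set (k := Rmin (sin g / 2) (Rmin ((1 - cos e1) / sin g) (e * sin g ^ 2 / (2 * cos g)))).
  assert (Hk1 : k <= sin g / 2) by apply Rmin_l.
  assert (Hk2 : k <= (1 - cos e1) / sin g) by (eapply Rle_trans; [apply Rmin_r|apply Rmin_l]).
  assert (Hk3 : k <= e * sin g ^ 2 / (2 * cos g)) by (eapply Rle_trans; [apply Rmin_r|apply Rmin_r]).
  assert (Hk : 0 < k).
  { repeat apply Rmin_glb_lt; [lra|apply Rdiv_lt_0_compat; lra|].
    apply Rdiv_lt_0_compat; [apply Rmult_lt_0_compat; [lra|apply pow_lt; lra]|lra]. }
  set (u := Rmin (Rmin h (T1 - t0)) (Rmin 1 k)).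
  assert (Hu1 : u <= h) by (eapply Rle_trans; [apply Rmin_l|apply Rmin_l]).
  assert (Hu2 : u <= T1 - t0) by (eapply Rle_trans; [apply Rmin_l|apply Rmin_r]).
  assert (Hu3 : u <= 1) by (eapply Rle_trans; [apply Rmin_r|apply Rmin_l]).
  assert (Hu4 : u <= k) by (eapply Rle_trans; [apply Rmin_r|apply Rmin_r]).
  assert (Hu : 0 < u) by (repeat apply Rmin_glb_lt; lra).
  assert (Hu2k : u ^ 2 <= k) by nra.
  exists (t0 + u). split; [lra|split; [lra|]].
  pose proof (lyap_near_departure (t0 + u)) as Hl. replace (t0 + u - t0) with u in Hl by ring.
  assert (acos (1 - sin g * u ^ 2) <= e1).
  { apply acos_le; [pose proof PI2_1; lra|].
    assert (Hsu : u ^ 2 * sin g <= (1 - cos e1) / sin g * sin g) by (apply Rmult_le_compat_r; lra).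
    replace ((1 - cos e1) / sin g * sin g) with (1 - cos e1) in Hsu by (field; lra). nra. }
  assert (acos (1 - sin g * u ^ 2) / sin g <= e / 2).
  { apply (Rmult_le_reg_r (sin g)); auto. unfold Rdiv. rewrite Rmult_assoc, Rinv_l by lra. lra. }
  assert (cos g * u ^ 2 / sin g ^ 2 <= e / 2).
  { apply (Rmult_le_reg_r (sin g ^ 2 / cos g)); [apply Rdiv_lt_0_compat; nra|].
    replace (cos g * u ^ 2 / sin g ^ 2 * (sin g ^ 2 / cos g)) with (u ^ 2) by (field; lra).
    replace (e / 2 * (sin g ^ 2 / cos g)) with (e * sin g ^ 2 / (2 * cos g)) by (field; lra). lra. }
  pose proof (Hl ltac:(lra) ltac:(lra)). lra.
Qed.


Lemma lyap_le_elapsed t : t0 < t <= T1 -> (forall y, t0 < y <= t -> 0 < psi_along y) ->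
  lyap t <= t - t0.
Proof.
  intros Ht Hpos. apply Rle_plus_epsilon. intros e He.
  destruct (lyap_small_near_departure e (t - t0)) as [t' [Ht' [_ Hl]]]; [lra|lra|].
  pose proof (lyap_lipschitz t' t ltac:(lra) ltac:(lra) ltac:(lra) ltac:(intros; apply Hpos; lra)). lra.
Qed.

Lemma angle_le_elapsed t : t0 < t <= T1 -> angle t <= sin g * (t - t0).
Proof.
  intros Ht. destruct sin_cos_pos as [Hs Hc]. apply Rle_plus_epsilon. intros e He.
  destruct (lyap_small_near_departure (e / sin g) (t - t0)) as [t' [Ht' [_ Hl]]];
    [apply Rdiv_lt_0_compat; lra|lra|].
  pose proof (angle_lipschitz t' t ltac:(lra) ltac:(lra) ltac:(lra)).
  pose proof (angle_le_lyap t').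
  assert (sin g * lyap t' <= e).
  { replace e with (sin g * (e / sin g)) by (field; lra). apply Rmult_le_compat_l; lra. }
  assert (sin g * (t - t') <= sin g * (t - t0)) by (apply Rmult_le_compat_l; lra). lra.
Qed.

Lemma e1_lt_rho t : -1 < psi_along t < 1 -> psi_perp t <> 0 -> psi_e1 t < rho t.
Proof.
  intros Hw Hq. pose proof (rho_pos t Hw). pose proof (rho_sqr t).
  assert (0 < psi_perp t ^ 2) by (rewrite <- Rsqr_pow2; apply Rsqr_pos_lt; auto). nra.
Qed.

(* On an initial Y-arc psi_perp < 0, so psi leaves psi0 strictly slower than at speed sin g. *)
Lemma angle_lt_elapsed_after_Y_arc ep : 0 < ep -> (forall y, t0 < y < t0 + ep -> A y = false) ->
  forall t, t0 < t <= T1 -> angle t < sin g * (t - t0).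
Proof.
  intros Hep Harc t Ht. destruct sin_cos_pos as [Hs Hc].
  set (m := Rmin (Rmin ep (t - t0)) (Rmin 1 (sin g / 2))).
  assert (Hm1 : m <= ep) by (eapply Rle_trans; [apply Rmin_l|apply Rmin_l]).
  assert (Hm2 : m <= t - t0) by (eapply Rle_trans; [apply Rmin_l|apply Rmin_r]).
  assert (Hm3 : m <= 1) by (eapply Rle_trans; [apply Rmin_r|apply Rmin_l]).
  assert (Hm4 : m <= sin g / 2) by (eapply Rle_trans; [apply Rmin_r|apply Rmin_r]).
  assert (Hm : 0 < m) by (repeat apply Rmin_glb_lt; lra).
  clearbody m.
  set (a := t0 + m / 3). set (b := t0 + 2 * m / 3).
  assert (Hstrict : angle b - sin g * b < angle a - sin g * a).
  { apply (strictly_decreasing (fun y => angle y - sin g * y)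
      (fun y => sin g * psi_e1 y / rho y - sin g * 1)); [unfold a, b; lra| |].
    - intros y Hy. apply cont_minus; [apply angle_cont, along_range|apply cont_scal, cont_id].
      unfold a, b in Hy; lra.
    - intros y Hy. unfold a, b in Hy.
      assert (Hw : -1 < psi_along y < 1) by (apply along_range; lra).
      assert (Hsm : smooth_time y) by (apply (smooth_on_constant_arc A T t0 (t0 + m) false); lra || auto;
        intros z Hz; apply Harc; lra).
      split; [apply dlim_minus; [apply angle_deriv; auto|apply dlim_scal, derivable_pt_lim_id]|].
      assert (Hq : psi_perp y < 0).
      { apply perp_neg_on_Y_arc; try lra; [|intros z Hz; apply Harc; lra].
        assert ((y - t0) ^ 2 <= y - t0) by nra. lra. }
      pose proof (e1_lt_rho y Hw ltac:(lra)). pose proof (rho_pos y Hw).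
      assert (psi_e1 y / rho y < 1).
      { apply (Rmult_lt_reg_r (rho y)); auto. unfold Rdiv. rewrite Rmult_assoc, Rinv_l; lra. }
      unfold Rdiv in *. nra. }
  pose proof (angle_le_elapsed a ltac:(unfold a; lra)).
  pose proof (angle_lipschitz b t ltac:(unfold b; lra) ltac:(unfold b; lra) ltac:(lra)).
  lra.
Qed.

(* If psi_e1 >= 0 at a zero of psi_perp, psi_perp cannot increase right after it. *)
Lemma e1_neg_at_perp_zero tau : t0 < tau < T1 -> psi_perp tau = 0 ->
  (forall eta, 0 < eta -> exists t, tau <= t < tau + eta /\ t <= T1 /\ 0 < psi_perp t) ->
  psi_e1 tau < 0.
Proof.
  intros Htau Hq Hnext. destruct sin_cos_pos as [Hs Hc].
  pose proof (rho_pos tau (along_range tau ltac:(lra))) as Hr. pose proof (rho_sqr tau) as Hrs.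
  destruct (Rlt_dec (psi_e1 tau) 0) as [|Hx]; auto. exfalso.
  assert (Hxpos : 0 < psi_e1 tau).
  { destruct (Req_dec (psi_e1 tau) 0) as [E|]; [|lra]. rewrite E, Hq in Hrs. nra. }
  destruct (continuity_pt_pos_nbhd psi_e1 tau (psi_e1_cont tau) Hxpos) as [d [Hd Hnbhd]].
  destruct (Hnext d Hd) as [t [Ht [HtT1 Hqt]]].
  assert (psi_perp t <= psi_perp tau); [|lra].
  apply (nonincreasing_on psi_perp (fun y => if A y then 0 else - cos g * psi_e1 y)); try lra.
  - intros; apply psi_perp_cont.
  - intros c Hc' Hs'. split; [apply psi_perp_deriv; auto|].
    assert (0 < psi_e1 c) by (apply Hnbhd; rewrite Rabs_right; lra).
    destruct (A c); nra.
Qed.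

Lemma elapsed_ge_without_crossing : (forall t, t0 < t <= T1 -> 0 < psi_along t) ->
  (PI / 2 - g) / sin g + / cos g <= T1 - t0.
Proof.
  intros Hpos. destruct sin_cos_pos as [Hs Hc].
  set (h := Rmin (T1 - t0) (Rmin 1 (sin g / 2))).
  assert (Hh1 : h <= T1 - t0) by apply Rmin_l.
  assert (Hh2 : h <= 1) by (eapply Rle_trans; [apply Rmin_r|apply Rmin_l]).
  assert (Hh3 : h <= sin g / 2) by (eapply Rle_trans; [apply Rmin_r|apply Rmin_r]).
  assert (Hh : 0 < h) by (repeat apply Rmin_glb_lt; lra).
  clearbody h.
  assert (Hqa : psi_perp (t0 + h) <= 0).
  { apply perp_nonpos_near_departure; [lra|]. replace (t0 + h - t0) with h by ring. nra. }
  assert (HqT1 : 0 < psi_perp T1).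
  { pose proof (Hpos T1 ltac:(lra)). rewrite coord2_frame in Hhit. nra. }
  assert (Ha : t0 + h < T1) by (destruct (Req_dec (t0 + h) T1) as [E|]; [rewrite E in Hqa|]; lra).
  destruct (last_zero_before_positive psi_perp (t0 + h) T1) as [tau [Htau [Hqtau Hnext]]]; auto.
  { intros; apply psi_perp_cont. }
  pose proof (e1_neg_at_perp_zero tau ltac:(lra) Hqtau Hnext) as Hx.
  assert (Hrho : rho tau = - psi_e1 tau).
  { pose proof (rho_sqr tau) as Hrs. rewrite Hqtau in Hrs.
    pose proof (rho_pos tau (along_range tau ltac:(lra))). nra. }
  assert (Hlyap : lyap tau = angle tau / sin g + / cos g).
  { unfold lyap. rewrite Hrho. field. lra. }
  pose proof (lyap_le_elapsed tau ltac:(lra) ltac:(intros; apply Hpos; lra)).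
  pose proof (angle_lipschitz tau T1 ltac:(lra) ltac:(lra) ltac:(lra)).
  assert (Hangle : PI / 2 - g <= angle T1).
  { apply le_acos; [pose proof PI_RGT_0; lra|]. rewrite cos_shift.
    pose proof (frame_bounds T1). pose proof along_at_hit_le. lra. }
  assert (Hbound : PI / 2 - g <= angle tau + sin g * (T1 - tau)) by lra.
  apply (Rmult_le_compat_r (/ sin g)) in Hbound; [|apply Rlt_le, Rinv_0_lt_compat; lra].
  replace ((angle tau + sin g * (T1 - tau)) * / sin g) with (angle tau / sin g + (T1 - tau)) in Hbound
    by (field; lra).
  unfold Rdiv at 1. lra.
Qed.

End Departure.

Lemma time_gt_of_initial_Y_arc ep : 0 < ep -> (forall t, 0 < t < ep -> A t = false) -> PI / 2 / sin g < T.
Proof.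
  intros Hep Harc. destruct sin_cos_pos as [Hs Hc].
  destruct first_hit as [T1 [HT1 [Hhit Hbefore]]].
  destruct (last_level_time psi_along 0 T1 1) as [t0 [Ht0 [Hdepart Hnot_back]]]; try lra.
  { intros; apply psi_along_cont. }
  { apply frame_at_start. }
  assert (Ht0' : t0 < T1).
  { destruct (Req_dec t0 T1) as [E|]; [|lra]. subst t0.
    destruct (frame_at_along_one T1 Hdepart) as [_ Hq].
    rewrite coord2_frame, Hdepart, Hq in Hhit. lra. }
  assert (Hslow : PI / 2 < sin g * T -> PI / 2 / sin g < T).
  { intros H. apply (Rmult_lt_reg_r (sin g)); auto. replace (PI / 2 / sin g * sin g) with (PI / 2) by (field; lra).
    lra. }
  destruct (classic (exists tw, t0 < tw <= T1 /\ psi_along tw <= 0)) as [[tw [Htw Hw]]|Hno].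
  - apply Hslow.
    assert (PI / 2 <= angle tw).
    { apply le_acos; [pose proof PI_RGT_0; lra|]. rewrite cos_PI2.
      pose proof (frame_bounds tw). lra. }
    assert (angle tw < sin g * tw).
    { destruct (Req_dec t0 0) as [E|Hne].
      - subst t0. replace tw with (tw - 0) at 2 by ring.
        apply (angle_lt_elapsed_after_Y_arc T1 0 HT1 Hhit Hbefore ltac:(lra) Hdepart Hnot_back ep); auto.
        intros y Hy. apply Harc. lra.
      - pose proof (angle_le_elapsed T1 t0 HT1 Hhit Hbefore ltac:(lra) Hdepart Hnot_back tw Htw). nra. }
    assert (sin g * tw <= sin g * T) by (apply Rmult_le_compat_l; lra). lra.
  - assert (Hpos : forall t, t0 < t <= T1 -> 0 < psi_along t).
    { intros t Ht. apply Rnot_le_lt. intros Hle. apply Hno. exists t. auto. }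
    pose proof (elapsed_ge_without_crossing T1 t0 HT1 Hhit Hbefore ltac:(lra) Hdepart Hnot_back Hpos) as Hlong.
    pose proof (mul_cos_lt_sin g Hg).
    assert (g / sin g < / cos g).
    { apply (Rmult_lt_reg_r (sin g * cos g)); [nra|].
      replace (g / sin g * (sin g * cos g)) with (g * cos g) by (field; lra).
      replace (/ cos g * (sin g * cos g)) with (sin g) by (field; lra). lra. }
    replace ((PI / 2 - g) / sin g) with (PI / 2 / sin g - g / sin g) in Hlong by (field; lra).
    lra.
Qed.

End Trajectory.

(** * Optimality of the X-arc *)

Lemma list_pos_lower_bound (l : list R) : exists ep, 0 < ep /\ forall x, In x l -> 0 < x -> ep <= x.
Proof.
  induction l as [|y l [ep [Hep IH]]].
  - exists 1. split; [lra|]. intros x [].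
  - destruct (Rlt_dec 0 y) as [Hy|Hy].
    + exists (Rmin ep y). split; [apply Rmin_glb_lt; lra|].
      intros x [<-|Hx] Hx0; [apply Rmin_r|]. eapply Rle_trans; [apply Rmin_l|]. apply IH; auto.
    + exists ep. split; auto. intros x [<-|Hx] Hx0; [lra|]. apply IH; auto.
Qed.

(* The indicator of [A] is locally constant before the first positive switching time, hence has
   zero derivative there and is constant. *)
Lemma control_initially_constant (A : R -> bool) T : admissible_control A T -> 0 < T ->
  exists ep, 0 < ep <= T /\ forall t, 0 < t < ep -> A t = A (ep / 2).
Proof.
  intros [l Hl] HT. destruct (list_pos_lower_bound l) as [ep0 [Hep0 Hlow]].
  set (ep := Rmin ep0 T).
  assert (Hep : 0 < ep) by (apply Rmin_glb_lt; lra).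
  assert (Hep1 : ep <= ep0) by apply Rmin_l. assert (Hep2 : ep <= T) by apply Rmin_r.
  clearbody ep. exists ep. split; [lra|].
  set (ind := fun t => if A t then 1 else 0).
  assert (Hd : forall c, 0 < c < ep -> derivable_pt_lim ind c 0).
  { intros c Hc.
    assert (Hlc : loc_const A T c).
    { apply NNPP. intros Hn. assert (Hin : In c l) by (apply Hl; split; [lra|auto]).
      pose proof (Hlow c Hin ltac:(lra)). lra. }
    destruct Hlc as [d [Hd Hconst]].
    set (d' := Rmin d (Rmin c (T - c))).
    assert (E1 : d' <= d) by apply Rmin_l.
    assert (E2 : d' <= c) by (eapply Rle_trans; [apply Rmin_r|apply Rmin_l]).
    assert (E3 : d' <= T - c) by (eapply Rle_trans; [apply Rmin_r|apply Rmin_r]).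
    assert (Hd' : 0 < d') by (repeat apply Rmin_glb_lt; lra).
    clearbody d'.
    apply (derivable_pt_lim_locally_ext (fun _ => ind c) _ c (c - d') (c + d'));
      [lra| |apply derivable_pt_lim_const].
    intros z Hz. unfold ind. rewrite (Hconst z); auto; [lra|]. unfold Rabs; destruct Rcase_abs; lra. }
  assert (Hflat : forall a b, 0 < a -> a < b -> b < ep -> ind b = ind a).
  { intros a b Ha Hab Hb.
    destruct (MVT_interior ind (fun _ => 0) a b) as [c [_ E]]; [lra| |intros; apply Hd; lra|lra].
    intros c Hc. apply derivable_continuous_pt. exists 0. apply Hd. lra. }
  intros t Ht.
  assert (Hi : ind t = ind (ep / 2)).
  { destruct (total_order_T t (ep / 2)) as [[Hlt|Heq]|Hgt]; [symmetry; apply Hflat; lra|rewrite Heq; reflexivity|apply Hflat; lra]. }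
  unfold ind in Hi. destruct (A t), (A (ep / 2)); auto; lra.
Qed.

(* Under the constant control X, psi0 rotates towards e1 at angular speed sin g and reaches
   Sigma at time PI / 2 / sin g. *)
Definition X_arc (g t : R) : vec := fun i =>
  match i with
  | 0%nat => sin (sin g * t)
  | 1%nat => sin g * cos (sin g * t)
  | 2%nat => cos g * cos (sin g * t)
  | _ => 0
  end.

Lemma X_arc_deriv g i t : (i < 3)%nat ->
  derivable_pt_lim (fun y => X_arc g y i) t (mv (matA g true) (X_arc g t) i).
Proof.
  intros Hi. pose proof (sin2_cos2 g) as E. unfold Rsqr in E.
  assert (Hlin : derivable_pt_lim (fun y => sin g * y) t (sin g * 1))
    by apply dlim_scal, derivable_pt_lim_id.
  pose proof (dlim_comp _ sin t _ _ Hlin (derivable_pt_lim_sin (sin g * t))) as Dsin.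
  pose proof (dlim_comp _ cos t _ _ Hlin (derivable_pt_lim_cos (sin g * t))) as Dcos.
  destruct i as [|[|[|i]]]; [| | |lia]; unfold mv, matA, matX, X_arc; cbv beta iota.
  - replace (0 * sin (sin g * t) + sin g ^ 2 * (sin g * cos (sin g * t)) + sin g * cos g * (cos g * cos (sin g * t)))
      with (cos (sin g * t) * (sin g * 1)) by (transitivity (sin g * (sin g * sin g + cos g * cos g) * cos (sin g * t));
      [rewrite E|]; ring).
    exact Dsin.
  - replace (- sin g ^ 2 * sin (sin g * t) + 0 * (sin g * cos (sin g * t)) + 0 * (cos g * cos (sin g * t)))
      with (sin g * (- sin (sin g * t) * (sin g * 1))) by ring.
    apply dlim_scal, Dcos.
  - replace (- (sin g * cos g) * sin (sin g * t) + 0 * (sin g * cos (sin g * t)) + 0 * (cos g * cos (sin g * t)))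
      with (cos g * (- sin (sin g * t) * (sin g * 1))) by ring.
    apply dlim_scal, Dcos.
Qed.

Lemma X_arc_admissible g : 0 < g < PI / 2 ->
  admissible g (PI / 2 / sin g) (fun _ => true) (X_arc g).
Proof.
  intros Hg. assert (Hs : 0 < sin g) by (apply sin_gt_0; lra). pose proof PI_RGT_0.
  assert (HT : 0 <= PI / 2 / sin g) by (apply Rlt_le, Rdiv_lt_0_compat; lra).
  split; [auto|split; [|split; [|split]]].
  - exists nil. intros t [_ Hn]. exfalso. apply Hn. exists 1. split; [lra|auto].
  - split.
    + intros i t eps Hi _ Heps.
      assert (Hc : continuity_pt (fun y => X_arc g y i) t).
      { apply derivable_continuous_pt. eexists. apply X_arc_deriv; auto. }
      destruct (proj1 (continuity_pt_eps _ t) Hc eps Heps) as [d [Hd H']]. eauto.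
    + intros t _ _ i Hi. apply X_arc_deriv; auto.
  - intros i. unfold X_arc, psi0. rewrite Rmult_0_r, sin_0, cos_0.
    destruct i as [|[|[|i]]]; ring.
  - unfold inSigma, ip, e3, X_arc. simpl.
    replace (sin g * (PI / 2 / sin g)) with (PI / 2) by (field; lra). rewrite cos_PI2. ring.
Qed.

Theorem lemmaA2 (g T : R) (A : R -> bool) (psi p : R -> vec) :
  0 < g < PI / 2 ->
  regular g T A psi p ->
  time_optimal g T A psi ->
  exists delta, 0 < delta <= T /\ forall t, 0 < t < delta -> A t = true.
Proof.
  intros Hg _ [Hadm Hopt].
  pose proof (Hopt _ _ _ (X_arc_admissible g Hg)) as Hfast.
  destruct (first_hit g T A psi Hg Hadm) as [T1 [HT1 _]].
  destruct (control_initially_constant A T) as [ep [Hep Hconst]]; [apply Hadm|lra|].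
  exists ep. split; [lra|]. intros t Ht. rewrite (Hconst t Ht).
  destruct (A (ep / 2)) eqn:E; [reflexivity|exfalso].
  assert (PI / 2 / sin g < T); [|lra].
  apply (time_gt_of_initial_Y_arc g T A psi Hg Hadm ep); [lra|exact Hconst].
Qed.
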